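(* Assume nondegeneracy. Then $\mathcal{B}^*$ has at most $M!$ extreme points.
   Context: Let $M\ge1$. Let $X_1,\dots,X_M,S$ be random variables on finite alphabets with joint pmf $p(x_1,\dots,x_M,s)$, and for each $1\le k\le M$ let $q_k(z_k|x_k)$ be a fixed conditional pmf on a finite alphabet $\mathcal Z_k$, so that $(X_1,\dots,X_M,S,Z_1,\dots,Z_M)$ has joint pmf $p(x_1,\dots,x_M,s)\prod_{k=1}^M q_k(z_k|x_k)$. For $A\subseteq\{1,\dots,M\}$ write $X_A=(X_i)_{i\in A}$, $Z_A=(Z_i)_{i\in A}$ ($Z_\emptyset$ is a constant), and $I^c=\{1,\dots,M\}\setminus I$. Define $\mathcal{B}^*$ as the set of $(R_1,\dots,R_M)\in\mathbb{R}^M$ with $I(X_I;Z_I\mid Z_{I^c},S)\le\sum_{i\in I}R_i$ for every nonempty $I\subseteq\{1,\dots,M\}$. Nondegeneracy means: for all disjoint nonempty $I,I'\subseteq\{1,\dots,M\}$, $I(Z_I;Z_{I'}\mid Z_{(I\cup I')^c},S)>0$. *)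

From Stdlib Require Import Reals.
From mathcomp Require Import all_boot.
Set Implicit Arguments.
Unset Strict Implicit.
Unset Printing Implicit Defensive.

Local Open Scope R_scope.

Definition rsum (T : finType) (P : pred T) (F : T -> R) : R :=
  \big[Rplus/0]_(t : T | P t) F t.

Definition dist (Om T : finType) (P : Om -> R) (f : Om -> T) (t : T) : R :=
  rsum (fun w => f w == t) P.

(* Shannon entropy (natural log; convention 0 ln 0 = 0, since ln 0 = 0 in Stdlib) *)
Definition entropy (Om T : finType) (P : Om -> R) (f : Om -> T) : R :=
  - rsum predT (fun t => dist P f t * ln (dist P f t)).

Definition cmi (Om TA TB TC : finType) (P : Om -> R)
  (A : Om -> TA) (B : Om -> TB) (C : Om -> TC) : R :=
  entropy P (fun w => (A w, C w)) + entropy P (fun w => (B w, C w))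
  - entropy P (fun w => (A w, B w, C w)) - entropy P C.

Section Model.
Variables (M : nat) (X : 'I_M -> finType) (S : finType) (Z : 'I_M -> finType).

Definition Omega : finType :=
  ({dffun forall i : 'I_M, X i} * S * {dffun forall i : 'I_M, Z i})%type.

Definition joint (p : {dffun forall i : 'I_M, X i} -> S -> R)
  (q : forall k : 'I_M, X k -> Z k -> R) (w : Omega) : R :=
  p w.1.1 w.1.2 * \big[Rmult/1]_(k : 'I_M) q k (w.1.1 k) (w.2 k).

(* X_A and Z_A: the coordinates in A (coordinates outside A are masked) *)
Definition X_ (A : {set 'I_M}) (w : Omega) : {dffun forall i : 'I_M, option (X i)} :=
  @finfun _ (fun i => option (X i)) (fun i => if i \in A then Some (w.1.1 i) else None).
Definition Z_ (A : {set 'I_M}) (w : Omega) : {dffun forall i : 'I_M, option (Z i)} :=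
  @finfun _ (fun i => option (Z i)) (fun i => if i \in A then Some (w.2 i) else None).
Definition S_ (w : Omega) : S := w.1.2.

End Model.

Definition Bstar (M : nat) (X : 'I_M -> finType) (S : finType) (Z : 'I_M -> finType)
  (P : Omega X S Z -> R) (Rt : 'I_M -> R) : Prop :=
  forall I : {set 'I_M}, I != set0 ->
    cmi P (X_ I) (Z_ I) (fun w => (Z_ (~: I) w, S_ w)) <= rsum (fun i => i \in I) Rt.

Definition nondegenerate (M : nat) (X : 'I_M -> finType) (S : finType) (Z : 'I_M -> finType)
  (P : Omega X S Z -> R) : Prop :=
  forall I I' : {set 'I_M}, I != set0 -> I' != set0 -> [disjoint I & I'] ->
    0 < cmi P (Z_ I) (Z_ I') (fun w => (Z_ (~: (I :|: I')) w, S_ w)).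

Definition extreme_point (M : nat) (C : ('I_M -> R) -> Prop) (r : 'I_M -> R) : Prop :=
  C r /\ forall (a b : 'I_M -> R) (t : R), C a -> C b -> 0 < t < 1 ->
    (forall i, r i = t * a i + (1 - t) * b i) -> forall i, a i = b i.

(* Write f(I) := I(X_I; Z_I | Z_{I^c}, S).  Since Z_I is produced from X_I by
   the independent channels q_i,
     f(I) = sum_{i in I} E[ln q_i(Z_i | X_i)] + H(Z, S) - H(Z_{I^c}, S),
   so f(emptyset) = 0 and f is supermodular, by submodularity of entropy
   (sections EntropyAsLogLikelihood and Model).  Hence B* = { r | r(I) >= f(I) }
   is a supermodular ("contra-polymatroid") polyhedron.  For such a polyhedron
   (section SupermodularPolyhedron) the sets tight at an extreme point r form a
   lattice which, by extremality, separates the coordinates; the smallest tight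
   sets containing each coordinate define a partial order whose down-sets are
   tight, and along any linear extension s of it r equals the greedy vertex
     r_i = f({j | s j <= s i}) - f({j | s j < s i}).
   So every extreme point is one of the M! greedy vertices. *)

Set Warnings "-notation-overridden -redundant-canonical-projection".
From HB Require Import structures.
From Pilot Require Import Defs.
From Stdlib Require Import Reals Lra Classical.
From mathcomp Require Import all_boot fingroup perm.
Set Implicit Arguments. Unset Strict Implicit.
Local Open Scope R_scope.

(* (R, +, 0) and (R, *, 1) are commutative monoids and * distributes over +:
   this makes the generic bigop lemmas available for the real sums of Defs. *)
HB.instance Definition _ := Monoid.isComLaw.Build R 0 Rplus
  (fun x y z => esym (Rplus_assoc x y z)) Rplus_comm Rplus_0_l.
HB.instance Definition _ := Monoid.isComLaw.Build R 1 Rmult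
  (fun x y z => esym (Rmult_assoc x y z)) Rmult_comm Rmult_1_l.
HB.instance Definition _ := Monoid.isMulLaw.Build R 0 Rmult Rmult_0_l Rmult_0_r.
HB.instance Definition _ :=
  Monoid.isAddLaw.Build R Rmult Rplus Rmult_plus_distr_r Rmult_plus_distr_l.

Lemma big_Rle (I : finType) (A : pred I) (F G : I -> R) :
  (forall i, A i -> F i <= G i) ->
  \big[Rplus/0]_(i | A i) F i <= \big[Rplus/0]_(i | A i) G i.
Proof.
move=> FG; apply: (big_ind2 (fun x y => x <= y)) => //; first lra.
by move=> *; apply: Rplus_le_compat.
Qed.

Lemma big_Rge0 (I : finType) (A : pred I) (F : I -> R) :
  (forall i, A i -> 0 <= F i) -> 0 <= \big[Rplus/0]_(i | A i) F i.
Proof.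
move=> F0; apply: (big_ind (fun x => 0 <= x)) => //; first lra.
by move=> *; lra.
Qed.

Lemma prod_Rge0 (I : finType) (A : pred I) (F : I -> R) :
  (forall i, A i -> 0 <= F i) -> 0 <= \big[Rmult/1]_(i | A i) F i.
Proof.
move=> F0; apply: (big_ind (fun x => 0 <= x)) => //; first lra.
by move=> *; apply: Rmult_le_pos.
Qed.

(* Holds also at 0, where the Stdlib inverse is 0. *)
Lemma Rinv_ge0 x : 0 <= x -> 0 <= / x.
Proof.
move=> x0; case: (Req_dec x 0) => [-> | ?]; first by rewrite Rinv_0; lra.
by apply/Rlt_le/Rinv_0_lt_compat; lra.
Qed.

Lemma prod_Rgt0_factor (I : finType) (F : I -> R) :
  (forall i, 0 <= F i) -> 0 < \big[Rmult/1]_i F i -> forall i, 0 < F i.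
Proof.
move=> F0 Fpos i; case: (Req_dec (F i) 0) => [Fi0|]; last by have := F0 i; lra.
by move: Fpos; rewrite (bigD1 i) //= Fi0 Rmult_0_l; lra.
Qed.

Lemma ln_prod (I : finType) (A : pred I) (F : I -> R) :
  (forall i, A i -> 0 < F i) ->
  ln (\big[Rmult/1]_(i | A i) F i) = \big[Rplus/0]_(i | A i) ln (F i).
Proof.
move=> Fpos.
suff [] : 0 < \big[Rmult/1]_(i | A i) F i /\
  ln (\big[Rmult/1]_(i | A i) F i) = \big[Rplus/0]_(i | A i) ln (F i) by [].
apply: (big_ind2 (fun x y => 0 < x /\ ln x = y)).
- by split; [lra | exact: ln_1].
- move=> x1 y1 x2 y2 [x1pos <-] [x2pos <-].
  by split; [exact: Rmult_lt_0_compat | exact: ln_mult].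
- by move=> i Ai; split; [exact: Fpos |].
Qed.

Lemma pos_lower_bound (T : finType) (g : T -> R) :
  (forall x, 0 < g x) -> exists e, 0 < e /\ forall x, e <= g x.
Proof.
move=> gpos.
suff [e [e0 He]] : exists e, 0 < e /\ forall x, x \in enum T -> e <= g x.
  by exists e; split=> // x; apply: He; rewrite mem_enum.
elim: (enum T) => [|a s [e [e0 He]]]; first by exists 1; split; [lra |].
exists (Rmin e (g a)); split; first exact: Rmin_pos.
move=> x; rewrite in_cons => /orP [/eqP -> | xs]; first exact: Rmin_r.
exact: Rle_trans (Rmin_l _ _) (He _ xs).
Qed.

Section SupermodularPolyhedron.
Variables (M : nat) (f : {set 'I_M} -> R).

Definition weight (r : 'I_M -> R) (A : {set 'I_M}) : R := \big[Rplus/0]_(i in A) r i.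

Definition polyhedron (r : 'I_M -> R) : Prop :=
  forall I : {set 'I_M}, I != set0 -> f I <= weight r I.

Lemma weight0 r : weight r set0 = 0.
Proof. by rewrite /weight big_set0. Qed.

Lemma weight_split r A B : weight r A = weight r (A :&: B) + weight r (A :\: B).
Proof.
rewrite /weight (bigID (mem B)) /=.
by congr (_ + _); apply: eq_bigl => i; rewrite !inE andbC.
Qed.

(* Weights are modular, so the slack f - r inherits the supermodularity of f. *)
Lemma weight_modular r A B :
  weight r (A :|: B) + weight r (A :&: B) = weight r A + weight r B.
Proof.
rewrite (weight_split r (A :|: B) B) (weight_split r A B).
rewrite [(A :|: B) :&: B]setIC setKU.
by rewrite setDUl setDv setU0; ring.
Qed.

Lemma weight_lin r d e A :
  weight (fun i => r i + e * d i) A = weight r A + e * weight d A.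
Proof. by rewrite /weight big_split /= big_distrr. Qed.

Lemma weight_delta i A :
  weight (fun k => if k == i then 1 else 0) A = if i \in A then 1 else 0.
Proof.
rewrite /weight; case: ifP => iA; last first.
  by rewrite big1 // => k kA; case: eqP => // ki; rewrite -ki kA in iA.
by rewrite (bigD1 i) //= eqxx big1 ?Rplus_0_r // => k /andP [_ /negbTE ->].
Qed.

Lemma weight_prefix (s : {perm 'I_M}) r i :
  weight r [set j | (s j <= s i)%N] = weight r [set j | (s j < s i)%N] + r i.
Proof.
rewrite (weight_split r _ [set j | (s j < s i)%N]).
have -> : [set j | (s j <= s i)%N] :&: [set j | (s j < s i)%N] = [set j | (s j < s i)%N].
  by apply/setIidPr/subsetP => j; rewrite !inE => /ltnW.
suff -> : [set j | (s j <= s i)%N] :\: [set j | (s j < s i)%N] = [set i].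
  by rewrite /weight big_set1.
apply/setP => j; rewrite !inE -leqNgt -eqn_leq.
by apply/eqP/eqP => [/val_inj/perm_inj | ->].
Qed.

Definition greedy (s : {perm 'I_M}) (i : 'I_M) : R :=
  f [set j | (s j <= s i)%N] - f [set j | (s j < s i)%N].

Hypothesis f0 : f set0 = 0.
Hypothesis f_supermod : forall A B, f A + f B <= f (A :|: B) + f (A :&: B).

Variable r : 'I_M -> R.
Hypothesis r_in : polyhedron r.

Definition tight (T : {set 'I_M}) : Prop := f T = weight r T.
Definition tightb (T : {set 'I_M}) : bool :=
  if Req_EM_T (f T) (weight r T) then true else false.

Lemma tightP T : reflect (tight T) (tightb T).
Proof. by rewrite /tightb; case: Req_EM_T => h; constructor. Qed.

Lemma r_feasible I : f I <= weight r I.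
Proof. by case: (eqVneq I set0) => [->|]; [rewrite f0 weight0; lra | exact: r_in]. Qed.

Lemma tight0 : tight set0.
Proof. by rewrite /tight f0 weight0. Qed.

(* Tight sets form a lattice: slacks are nonnegative and supermodular. *)
Lemma tight_lattice A B : tight A -> tight B -> tight (A :|: B) /\ tight (A :&: B).
Proof.
rewrite /tight => tA tB; have := f_supermod A B; have := weight_modular r A B.
have := r_feasible (A :|: B); have := r_feasible (A :&: B); split; lra.
Qed.

Lemma tightU A B : tight A -> tight B -> tight (A :|: B).
Proof. by move=> tA tB; case: (tight_lattice tA tB). Qed.

Lemma tightI A B : tight A -> tight B -> tight (A :&: B).
Proof. by move=> tA tB; case: (tight_lattice tA tB). Qed.

(* Moving r along a direction d that vanishes on all tight sets stays inside
   the polyhedron for small steps, since the other constraints have slack. *)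
Lemma feasible_perturbation d : (forall T, tight T -> weight d T = 0) ->
  exists e, 0 < e /\ forall s, Rabs s <= 1 -> polyhedron (fun i => r i + (s * e) * d i).
Proof.
move=> d_tight.
pose g T := if tightb T then 1 else (weight r T - f T) / (1 + Rabs (weight d T)).
have [e [e0 e_le_g]] : exists e, 0 < e /\ forall T, e <= g T.
  apply: pos_lower_bound => T; rewrite /g; case: tightP => tT; first lra.
  apply: Rdiv_lt_0_compat; last by have := Rabs_pos (weight d T); lra.
  by have := r_feasible T; rewrite /tight in tT; lra.
exists e; split => // s s1 I _; rewrite weight_lin.
case: (tightP I) => tI.
  by rewrite d_tight // Rmult_0_r Rplus_0_r; apply: r_feasible.
have dpos : 0 < 1 + Rabs (weight d I) by have := Rabs_pos (weight d I); lra.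
have slack : e * (1 + Rabs (weight d I)) <= weight r I - f I.
  have := e_le_g I; rewrite /g; case: tightP => // _ eg.
  have := Rmult_le_compat_r _ _ _ (Rlt_le _ _ dpos) eg.
  by rewrite /Rdiv Rmult_assoc Rinv_l ?Rmult_1_r; lra.
have sd : - Rabs (weight d I) <= s * weight d I.
  have := Rabs_mult s (weight d I); have := Rle_abs (- (s * weight d I)).
  rewrite Rabs_Ropp; have := Rabs_pos (weight d I); nra.
have := Rmult_le_compat_l e _ _ (Rlt_le _ _ e0) sd; lra.
Qed.

Hypothesis r_ext : extreme_point polyhedron r.

Lemma extreme_rigid d : (forall T, tight T -> weight d T = 0) -> forall i, d i = 0.
Proof.
move=> d_tight; have [e [e0 feas]] := feasible_perturbation d_tight.
have abs1 : Rabs 1 <= 1 by rewrite Rabs_R1; lra.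
have absN1 : Rabs (-1) <= 1 by rewrite Rabs_Ropp Rabs_R1; lra.
have half : 0 < 1/2 < 1 by lra.
have midpoint j : r j = 1/2 * (r j + (1 * e) * d j) + (1 - 1/2) * (r j + (-1 * e) * d j).
  by field.
have := r_ext.2 _ _ _ (feas _ abs1) (feas _ absN1) half midpoint.
by move=> same i; have := same i; nra.
Qed.

Lemma tight_cover i : exists T, tight T /\ i \in T.
Proof.
apply: NNPP => no_T.
suff : (fun k => if k == i then 1 else 0) i = 0 by rewrite /= eqxx; lra.
apply: (extreme_rigid (d := fun k => if k == i then 1 else 0)) => T tT.
by rewrite weight_delta; case: ifP => // iT; case: no_T; exists T.
Qed.

Lemma tight_separates i j : (forall T, tight T -> (i \in T) = (j \in T)) -> i = j.
Proof.
move=> same; apply: NNPP => ij.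
pose d k := (if k == i then 1 else 0) + (-1) * (if k == j then 1 else 0).
suff : d i = 0 by rewrite /d eqxx; case: eqP => [ji|_]; [by case: ij | lra].
apply: (extreme_rigid (d := d)) => T tT.
by rewrite /d weight_lin !weight_delta (same T tT); case: (j \in T); ring.
Qed.

(* The full set is tight, as the union of tight sets covering all coordinates. *)
Lemma tightT : tight setT.
Proof.
have -> : setT = \bigcup_(T | tightb T) T.
  apply/esym/setP => i; rewrite inE; apply/bigcupP.
  by have [T [tT iT]] := tight_cover i; exists T => //; apply/tightP.
apply: (big_ind tight); [exact: tight0 | exact: tightU | by move=> T /tightP].
Qed.

Definition hull i : {set 'I_M} := \bigcap_(T | tightb T && (i \in T)) T.

Lemma hull_tight i : tight (hull i).
Proof.
apply: (big_ind tight); [exact: tightT | exact: tightI | by move=> T /andP [/tightP]].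
Qed.

Lemma hullP i j : reflect (forall T, tight T -> i \in T -> j \in T) (j \in hull i).
Proof.
apply: (iffP bigcapP) => [jT T tT iT | jT T /andP [/tightP tT iT]]; last exact: jT.
by apply: jT; rewrite iT andbT; apply/tightP.
Qed.

Lemma hull_refl i : i \in hull i.
Proof. exact/hullP. Qed.

Lemma hull_trans i j k : j \in hull i -> k \in hull j -> k \in hull i.
Proof. by move=> /hullP ji /hullP kj; apply/hullP => T tT iT; apply/kj/ji. Qed.

Lemma hull_antisym i j : j \in hull i -> i \in hull j -> i = j.
Proof.
move=> /hullP ji /hullP ij; apply: tight_separates => T tT.
by apply/idP/idP; [apply: ji | apply: ij].
Qed.

(* Every down-closed set for this order is a union of hulls, hence tight. *)
Lemma downset_tight (D : {set 'I_M}) :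
  (forall i j, i \in D -> j \in hull i -> j \in D) -> tight D.
Proof.
move=> down.
have -> : D = \bigcup_(i in D) hull i.
  apply/setP => j; apply/idP/bigcupP => [jD | [i iD]]; last exact: down.
  by exists j => //; apply: hull_refl.
apply: (big_ind tight); [exact: tight0 | exact: tightU | by move=> i _; apply: hull_tight].
Qed.

(* A linear extension of the hull order: sort by the size of the hull,
   breaking ties by index; [key] encodes this lexicographic order in nat. *)
Definition key (i : 'I_M) : nat := (#|hull i| * M + i)%N.

(* key is monotone along the hull order (hull j is a proper subset of hull i
   when j <> i) ... *)
Lemma key_hull i j : j \in hull i -> (key j <= key i)%N.
Proof.
move=> ji; case: (eqVneq j i) => [-> // | ne].
have hull_lt : (#|hull j| < #|hull i|)%N.
  apply: proper_card; apply/properP; split.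
    by apply/subsetP => k; apply: hull_trans.
  exists i; first exact: hull_refl.
  by apply/negP => ij; move: ne; rewrite (hull_antisym ji ij) eqxx.
rewrite /key; apply: leq_trans (leq_addr i _).
apply: leq_trans (_ : (#|hull j|.+1 * M <= _)%N); last by rewrite leq_mul2r hull_lt orbT.
by rewrite mulSn [X in (_ <= X)%N]addnC leq_add2l ltnW.
Qed.

(* ... and injective, because the remainder mod M recovers the index. *)
Lemma key_inj : injective key.
Proof.
move=> i j /(congr1 (modn^~ M)); rewrite /key !modnMDl !modn_small //.
exact: val_inj.
Qed.

Definition rank (i : 'I_M) : nat := #|[set k | (key k < key i)%N]|.

Lemma rank_lt i : (rank i < M)%N.
Proof.
rewrite -[M]card_ord -cardsT; apply: proper_card; apply/properP.
by split; [exact: subsetT | exists i; rewrite ?inE ?ltnn].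
Qed.

Lemma rank_le i j : (key i <= key j)%N -> (rank i <= rank j)%N.
Proof.
move=> ij; apply: subset_leq_card; apply/subsetP => k; rewrite !inE => ki.
exact: leq_trans ki ij.
Qed.

Lemma rank_lt_mono i j : (key i < key j)%N -> (rank i < rank j)%N.
Proof.
move=> ij; apply: proper_card; apply/properP; split.
  by apply/subsetP => k; rewrite !inE => ki; apply: ltn_trans ki ij.
by exists i; rewrite !inE ?ltnn.
Qed.

Definition rank_ord (i : 'I_M) : 'I_M := Ordinal (rank_lt i).

Lemma rank_ord_inj : injective rank_ord.
Proof.
move=> i j /(congr1 val) /= rij; apply: key_inj.
by case: (ltngtP (key i) (key j)) => // /rank_lt_mono; rewrite rij ltnn.
Qed.

(* Main fact of the section: an extreme point is the greedy vertex of the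
   ordering by rank, because all its prefixes are down-closed, hence tight. *)
Lemma extreme_point_greedy : exists s : {perm 'I_M}, forall i, r i = greedy s i.
Proof.
pose s : {perm 'I_M} := perm rank_ord_inj.
have s_hull a b : b \in hull a -> (s b <= s a)%N.
  by move=> ba; rewrite !permE; apply/rank_le/key_hull.
exists s => i; rewrite /greedy.
have -> : f [set j | (s j <= s i)%N] = weight r [set j | (s j <= s i)%N].
  by apply: downset_tight => a b; rewrite !inE => ai /s_hull ba; apply: leq_trans ba ai.
have -> : f [set j | (s j < s i)%N] = weight r [set j | (s j < s i)%N].
  by apply: downset_tight => a b; rewrite !inE => ai /s_hull ba; apply: leq_ltn_trans ba ai.
by rewrite weight_prefix; lra.
Qed.

End SupermodularPolyhedron.

Section EntropyAsLogLikelihood.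
Variables (Om : finType) (P : Om -> R).
Hypothesis P0 : forall w, 0 <= P w.

(* mass g w is the probability of the atom {g = g w}; loglik g = E[ln P(g = g)],
   which is minus the entropy of g. *)
Definition mass (T : finType) (g : Om -> T) (w : Om) : R :=
  \big[Rplus/0]_(w' | g w' == g w) P w'.
Definition loglik (T : finType) (g : Om -> T) : R :=
  \big[Rplus/0]_w (P w * ln (mass g w)).

Lemma entropy_loglik (T : finType) (g : Om -> T) : entropy P g = - loglik g.
Proof.
rewrite /entropy /loglik /rsum; congr Ropp.
rewrite (partition_big g predT) //=; apply: eq_bigr => t _.
rewrite /dist /rsum big_distrl /=; apply: eq_bigr => w /eqP gw.
by rewrite /mass gw.
Qed.

Lemma mass_ge (T : finType) (g : Om -> T) w : P w <= mass g w.
Proof.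
rewrite /mass (bigD1 w) //=.
have := big_Rge0 (A := fun w' => (g w' == g w) && (w' != w)) (fun w _ => P0 w); lra.
Qed.

Lemma mass_eq (T : finType) (g : Om -> T) w w' : g w = g w' -> mass g w = mass g w'.
Proof. by rewrite /mass => ->. Qed.

Lemma loglik_ext (T1 T2 : finType) (g1 : Om -> T1) (g2 : Om -> T2) :
  (forall w w', (g1 w' == g1 w) = (g2 w' == g2 w)) -> loglik g1 = loglik g2.
Proof.
move=> same; rewrite /loglik; apply: eq_bigr => w _; congr (_ * ln _).
by apply: eq_bigl => w'; rewrite same.
Qed.

Lemma sum_mono (A B : pred Om) : (forall w, A w -> B w) ->
  \big[Rplus/0]_(w | A w) P w <= \big[Rplus/0]_(w | B w) P w.
Proof.
move=> AB; rewrite [X in _ <= X](bigID A) /=.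
have -> : \big[Rplus/0]_(w | B w && A w) P w = \big[Rplus/0]_(w | A w) P w.
  by apply: eq_bigl => w; case Aw: (A w); rewrite ?andbT ?andbF // AB.
have := big_Rge0 (A := fun w => B w && ~~ A w) (fun w _ => P0 w); lra.
Qed.

(* Submodularity of entropy, in the form needed for families of variables:
   if g3 is a function of g1 and of g2, and g4 a function of (g1, g2), then
   H(g3) + H(g4) <= H(g1) + H(g2). *)
Section Submodularity.
Variables (T1 T2 T3 T4 : finType).
Variables (g1 : Om -> T1) (g2 : Om -> T2) (g3 : Om -> T3) (g4 : Om -> T4).
Hypothesis g13 : forall a b, g1 a = g1 b -> g3 a = g3 b.
Hypothesis g23 : forall a b, g2 a = g2 b -> g3 a = g3 b.
Hypothesis g124 : forall a b, g1 a = g1 b -> g2 a = g2 b -> g4 a = g4 b.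

Let ratio w := mass g1 w * mass g2 w / (mass g3 w * mass g4 w).

(* Pointwise, by ln y <= y - 1 applied to y = ratio w. *)
Lemma log_ratio_le w :
  P w * ln (mass g1 w) + P w * ln (mass g2 w) + P w <=
  P w * ln (mass g3 w) + P w * ln (mass g4 w) + P w * ratio w.
Proof.
case: (Req_dec (P w) 0) => [-> | Pw]; first lra.
have {}Pw : 0 < P w by have := P0 w; lra.
have m1 : 0 < mass g1 w by have := mass_ge g1 w; lra.
have m2 : 0 < mass g2 w by have := mass_ge g2 w; lra.
have m3 : 0 < mass g3 w by have := mass_ge g3 w; lra.
have m4 : 0 < mass g4 w by have := mass_ge g4 w; lra.
have m12 := Rmult_lt_0_compat _ _ m1 m2; have m34 := Rmult_lt_0_compat _ _ m3 m4.
have ln_ratio : ln (ratio w) =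
    ln (mass g1 w) + ln (mass g2 w) - ln (mass g3 w) - ln (mass g4 w).
  rewrite /ratio /Rdiv ln_mult //; last exact: Rinv_0_lt_compat.
  by rewrite ln_Rinv // !ln_mult //; ring.
have ln_le : ln (ratio w) <= ratio w - 1.
  have ratio_pos : 0 < ratio w by apply: Rdiv_lt_0_compat.
  by have := exp_ineq1_le (ln (ratio w)); rewrite exp_ln //; lra.
have := Rmult_le_compat_l _ _ _ (Rlt_le _ _ Pw) ln_le; rewrite ln_ratio; nra.
Qed.

Let block u v := \big[Rplus/0]_(w | (g1 w == g1 u) && (g2 w == g2 v))
  (P w / (mass g3 w * mass g4 w)).

(* On a cell of positive mass, g3 and g4 are constant and the cell lies
   inside one atom of g4; so its contribution is at most 1 / mass g3. *)
Lemma block_le u v : block u v <= if g3 v == g3 u then / mass g3 u else 0.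
Proof.
case: (classic (exists w0, (g1 w0 == g1 u) && (g2 w0 == g2 v) /\ 0 < P w0)) =>
  [[w0 [/andP [/eqP e1 /eqP e2] Pw0]] | none]; last first.
  rewrite /block big1; last first.
    move=> w cell; case: (Req_dec (P w) 0) => [-> | Pw]; first by rewrite /Rdiv Rmult_0_l.
    by case: none; exists w; split => //; have := P0 w; lra.
  case: eqP => _; last lra.
  by apply: Rinv_ge0; apply: big_Rge0 => w _; apply: P0.
have same3 : g3 v = g3 u by rewrite -(g23 e2) (g13 e1).
rewrite same3 eqxx.
have m3u : mass g3 u = mass g3 w0 by apply: mass_eq; rewrite (g13 e1).
have m3pos : 0 < mass g3 u by rewrite m3u; have := mass_ge g3 w0; lra.
have m4pos : 0 < mass g4 w0 by have := mass_ge g4 w0; lra.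
have cell_mass : forall w, (g1 w == g1 u) && (g2 w == g2 v) -> g4 w = g4 w0.
  by move=> w /andP [/eqP f1 /eqP f2]; apply: g124; [rewrite f1 | rewrite f2].
have -> : block u v = \big[Rplus/0]_(w | (g1 w == g1 u) && (g2 w == g2 v)) P w
                      * / (mass g3 u * mass g4 w0).
  rewrite /block big_distrl /=; apply: eq_bigr => w cell.
  rewrite (mass_eq (g := g4) (cell_mass w cell)); congr (_ * / (_ * _)).
  by apply: mass_eq; apply: g13; case/andP: cell => /eqP.
have cell_le : \big[Rplus/0]_(w | (g1 w == g1 u) && (g2 w == g2 v)) P w <= mass g4 w0.
  by apply: sum_mono => w /cell_mass ->.
apply: Rle_trans (Rmult_le_compat_r _ _ _ _ cell_le) _.
  by apply/Rlt_le/Rinv_0_lt_compat/Rmult_lt_0_compat.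
by rewrite Rinv_mult -Rmult_assoc (Rmult_comm (mass g4 w0)) Rmult_assoc Rinv_r; lra.
Qed.

Lemma ratio_sum_blocks :
  \big[Rplus/0]_w (P w * ratio w) =
  \big[Rplus/0]_u \big[Rplus/0]_v (P u * P v * block u v).
Proof.
have mass_cond (T : finType) (g : Om -> T) w :
    mass g w = \big[Rplus/0]_u (if g w == g u then P u else 0).
  by rewrite /mass big_mkcond; apply: eq_bigr => u _; rewrite eq_sym.
transitivity (\big[Rplus/0]_w \big[Rplus/0]_u \big[Rplus/0]_v
    ((if g1 w == g1 u then P u else 0) * (if g2 w == g2 v then P v else 0) *
     (P w / (mass g3 w * mass g4 w)))).
  apply: eq_bigr => w _.
  have -> : P w * ratio w = mass g1 w * (mass g2 w * (P w / (mass g3 w * mass g4 w))).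
    by rewrite /ratio /Rdiv; ring.
  rewrite (mass_cond _ g1) (mass_cond _ g2) big_distrl /=; apply: eq_bigr => u _.
  rewrite big_distrl big_distrr /=; apply: eq_bigr => v _; ring.
rewrite exchange_big; apply: eq_bigr => u _; rewrite exchange_big; apply: eq_bigr => v _.
rewrite /block big_distrr [RHS]big_mkcond /=; apply: eq_bigr => w _.
by case: (g1 w == g1 u); case: (g2 w == g2 v); rewrite /= ?Rmult_0_l ?Rmult_0_r; ring.
Qed.

Lemma ratio_sum_le : \big[Rplus/0]_w (P w * ratio w) <= \big[Rplus/0]_w P w.
Proof.
rewrite ratio_sum_blocks; apply: big_Rle => u _.
apply: Rle_trans (_ : _ <= \big[Rplus/0]_v
    (P u * P v * (if g3 v == g3 u then / mass g3 u else 0))) _.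
  apply: big_Rle => v _; apply: Rmult_le_compat_l; last exact: block_le.
  exact: Rmult_le_pos.
have -> : \big[Rplus/0]_v (P u * P v * (if g3 v == g3 u then / mass g3 u else 0)) =
    P u * / mass g3 u * mass g3 u.
  rewrite [X in _ = _ * X]/mass big_distrr [RHS]big_mkcond /=.
  by apply: eq_bigr => v _; case: (g3 v == g3 u); ring.
case: (Req_dec (P u) 0) => [-> | Pu]; first lra.
have : 0 < mass g3 u by have := mass_ge g3 u; have := P0 u; lra.
by move=> m3u; rewrite Rmult_assoc Rinv_l; lra.
Qed.

Lemma loglik_submod : loglik g1 + loglik g2 <= loglik g3 + loglik g4.
Proof.
have := big_Rle (A := predT) (fun w _ => log_ratio_le w).
rewrite !big_split /=; have := ratio_sum_le; rewrite /loglik; lra.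
Qed.

End Submodularity.
End EntropyAsLogLikelihood.

Definition agree_outside (M : nat) (Z : 'I_M -> finType) (K : {set 'I_M})
  (z0 z : {dffun forall i, Z i}) : bool :=
  [forall k, (k \notin K) ==> (z k == z0 k)].

Lemma agree_outsideD1 (M : nat) (Z : 'I_M -> finType) (K : {set 'I_M}) j (c : Z j)
    (z0 z : {dffun forall i, Z i}) : j \in K ->
  agree_outside K z0 z && (z j == c) =
  agree_outside (K :\ j) (finfun (dfwith (fun k => z0 k) c)) z.
Proof.
move=> jK; apply/andP/forallP => [[/forallP agree /eqP zj] k | agree].
  rewrite !inE ffunE; case: (eqVneq k j) => [-> | kj] /=.
    by rewrite dfwith_in zj eqxx.
  by rewrite dfwith_out; [apply: agree | rewrite eq_sym].
split; last by have := agree j; rewrite !inE eqxx ffunE dfwith_in.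
apply/forallP => k; apply/implyP => kK; have := agree k; rewrite !inE ffunE.
case: (eqVneq k j) => [kj | kj] /=; first by rewrite kj jK in kK.
by rewrite kK dfwith_out // eq_sym.
Qed.

Lemma sum_free_coords (M : nat) (Z : 'I_M -> finType) (g : forall k, Z k -> R) :
  (forall k, \big[Rplus/0]_(c : Z k) g k c = 1) ->
  forall (K : {set 'I_M}) (z0 : {dffun forall i, Z i}),
  \big[Rplus/0]_(z | agree_outside K z0 z) \big[Rmult/1]_k g k (z k) =
  \big[Rmult/1]_(k | k \notin K) g k (z0 k).
Proof.
move=> g_norm K; move: {2}#|K| (erefl #|K|) => n; elim: n K => [|n IH] K cardK z0.
  have -> : K = set0 by apply/eqP; rewrite -cards_eq0 cardK.
  rewrite (big_pred1 z0); last first.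
    move=> z; apply/forallP/eqP => [agree | ->]; last by move=> k; rewrite eqxx implybT.
    by apply/ffunP => k; have := agree k; rewrite in_set0 => /eqP.
  by apply: eq_bigl => k; rewrite in_set0.
have [j jK] : exists j, j \in K by apply/set0Pn; rewrite -cards_eq0 cardK.
have cardKj : #|K :\ j| = n by move: cardK; rewrite (cardsD1 j K) jK => -[].
rewrite (partition_big (fun z : {dffun forall i, Z i} => z j) predT) //=.
rewrite (eq_bigr (fun c => g j c * \big[Rmult/1]_(k | k \notin K) g k (z0 k))).
  by rewrite -big_distrl /= g_norm Rmult_1_l.
move=> c _; rewrite (eq_bigl _ _ (fun z => agree_outsideD1 c z0 z jK)) IH //.
rewrite (bigD1 j) /=; last by rewrite !inE eqxx.
rewrite ffunE dfwith_in; congr (_ * _); apply: eq_big => k.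
  by rewrite !inE; case: (eqVneq k j) => [-> | _]; rewrite ?jK ?andbT.
by move=> /andP [_ kj]; rewrite ffunE dfwith_out // eq_sym.
Qed.

Lemma masked_eqE (M : nat) (T : 'I_M -> finType) (A : {set 'I_M})
    (u v : {dffun forall i, T i}) :
  ((@finfun _ (fun i => option (T i)) (fun i => if i \in A then Some (u i) else None)
     : {dffun forall i, option (T i)}) ==
   @finfun _ (fun i => option (T i)) (fun i => if i \in A then Some (v i) else None)) =
  [forall k, (k \in A) ==> (u k == v k)].
Proof.
apply/eqP/forallP => [uv k | agree].
  have := congr1 (fun g : {dffun forall i, option (T i)} => g k) uv.
  by rewrite /= !ffunE; case: (k \in A) => //= -[->]; rewrite eqxx.
apply/ffunP => k; rewrite !ffunE; case: ifP => // kA.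
by have := agree k; rewrite kA => /eqP ->.
Qed.

Lemma forall_splitC (M : nat) (I : {set 'I_M}) (a : pred 'I_M) :
  [forall k, (k \in I) ==> a k] && [forall k, (k \in ~: I) ==> a k] = [forall k, a k].
Proof.
apply/andP/forallP => [[/forallP aI /forallP aIc] k | a_all].
  by have := aI k; have := aIc k; rewrite inE; case: (k \in I).
by split; apply/forallP => k; rewrite a_all implybT.
Qed.

Section Model.
(* Declared without implicit arguments: q and its hypotheses take the channel
   index explicitly. *)
Unset Implicit Arguments.
Variables (M : nat) (X : 'I_M -> finType) (S : finType) (Z : 'I_M -> finType).
Variables (p : {dffun forall i : 'I_M, X i} -> S -> R) (q : forall k : 'I_M, X k -> Z k -> R).
Hypothesis p_nonneg : forall x s, 0 <= p x s.
Hypothesis q_nonneg : forall k x z, 0 <= q k x z.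
Hypothesis q_sum1 : forall k x, rsum predT (fun z => q k x z) = 1.
Set Implicit Arguments.

Local Notation Om := (Omega X S Z).
Local Notation P := (joint p q).

Lemma joint_ge0 (w : Om) : 0 <= P w.
Proof. by apply: Rmult_le_pos => //; apply: prod_Rge0 => *; apply: q_nonneg. Qed.

Definition ZS (K : {set 'I_M}) (w : Om) := (Z_ K w, S_ w).
Definition XZS (I K : {set 'I_M}) (w : Om) := (X_ I w, ZS K w).

Lemma Z_eqE K (w w' : Om) : (Z_ K w' == Z_ K w) = [forall k, (k \in K) ==> (w'.2 k == w.2 k)].
Proof. exact: masked_eqE. Qed.

Lemma X_eqE K (w w' : Om) :
  (X_ K w' == X_ K w) = [forall k, (k \in K) ==> (w'.1.1 k == w.1.1 k)].
Proof. exact: masked_eqE. Qed.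

Lemma Z_eq K (w w' : Om) : Z_ K w = Z_ K w' <-> (forall k, k \in K -> w.2 k = w'.2 k).
Proof.
split => [ww' k kK | agree].
  have : Z_ K w' == Z_ K w by rewrite ww' eqxx.
  by rewrite Z_eqE => /forallP/(_ k); rewrite kK => /eqP ->.
by apply/esym/eqP; rewrite Z_eqE; apply/forallP => k; apply/implyP => /agree ->.
Qed.

Lemma loglik_Zsplit I :
  loglik P (fun w => (Z_ I w, (Z_ (~: I) w, S_ w))) = loglik P (ZS setT).
Proof.
apply: loglik_ext => w w'; rewrite /ZS !xpair_eqE !Z_eqE andbA forall_splitC.
by congr (_ && _); apply: eq_forallb => k; rewrite inE.
Qed.

Lemma loglik_XZsplit I :
  loglik P (fun w => (X_ I w, Z_ I w, (Z_ (~: I) w, S_ w))) = loglik P (XZS I setT).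
Proof.
apply: loglik_ext => w w'; rewrite /XZS /ZS !xpair_eqE !Z_eqE -!andbA.
congr (_ && _); rewrite andbA forall_splitC.
by congr (_ && _); apply: eq_forallb => k; rewrite inE.
Qed.

Definition chan_loglik i : R := \big[Rplus/0]_(w : Om) (P w * ln (q i (w.1.1 i) (w.2 i))).

Definition agree_on (I : {set 'I_M}) (w : Om) (xs : {dffun forall i : 'I_M, X i} * S) :=
  [forall i, (i \in I) ==> (xs.1 i == w.1.1 i)] && (xs.2 == w.1.2).

Lemma mass_XZS I K w : mass P (XZS I K) w =
  \big[Rplus/0]_(xs | agree_on I w xs) (p xs.1 xs.2 *
    \big[Rplus/0]_(z : {dffun forall i, Z i} | [forall k, (k \in K) ==> (z k == w.2 k)])
      \big[Rmult/1]_k q k (xs.1 k) (z k)).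
Proof.
rewrite (eq_bigr _ (fun xs _ => big_distrr _ _ _)) pair_big_dep /mass /=.
apply: eq_bigl => -[[x s] z] /=.
rewrite /XZS /ZS !xpair_eqE X_eqE Z_eqE /agree_on /S_ /=.
by rewrite -andbA [X in _ && X]andbC andbA.
Qed.

Lemma mass_XZS_full I w : mass P (XZS I setT) w =
  \big[Rplus/0]_(xs | agree_on I w xs) (p xs.1 xs.2 * \big[Rmult/1]_k q k (xs.1 k) (w.2 k)).
Proof.
rewrite mass_XZS; apply: eq_bigr => xs _; congr (_ * _).
rewrite (big_pred1 w.2) // => z /=; apply/forallP/eqP => [agree | ->].
  by apply/ffunP => k; have := agree k; rewrite in_setT => /eqP.
by move=> k; rewrite eqxx implybT.
Qed.

(* Observing only Z_{I^c}: the channels into Z_I integrate out. *)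
Lemma mass_XZS_compl I w : mass P (XZS I (~: I)) w =
  \big[Rplus/0]_(xs | agree_on I w xs)
    (p xs.1 xs.2 * \big[Rmult/1]_(k | k \notin I) q k (xs.1 k) (w.2 k)).
Proof.
rewrite mass_XZS; apply: eq_bigr => xs _; congr (_ * _).
rewrite -(sum_free_coords (g := fun k c => q k (xs.1 k) c)); last first.
  by move=> k; have := q_sum1 k (xs.1 k).
by apply: eq_bigl => z; apply: eq_forallb => k; rewrite inE.
Qed.

Lemma mass_channel_factor I w : mass P (XZS I setT) w =
  \big[Rmult/1]_(i in I) q i (w.1.1 i) (w.2 i) * mass P (XZS I (~: I)) w.
Proof.
rewrite mass_XZS_full mass_XZS_compl big_distrr; apply: eq_bigr => xs /andP [/forallP xI _].
rewrite (bigID (mem I)) /=.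
have -> : \big[Rmult/1]_(k | k \in I) q k (xs.1 k) (w.2 k) =
    \big[Rmult/1]_(i in I) q i (w.1.1 i) (w.2 i).
  by apply: eq_bigr => k kI; have := xI k; rewrite kI => /eqP ->.
by rewrite -!Rmult_assoc (Rmult_comm (p xs.1 xs.2)).
Qed.

Lemma channel_pos (w : Om) : 0 < P w -> forall k, 0 < q k (w.1.1 k) (w.2 k).
Proof.
move=> Pw; apply: prod_Rgt0_factor => [k | ]; first exact: q_nonneg.
have prod0 : 0 <= \big[Rmult/1]_k q k (w.1.1 k) (w.2 k).
  by apply: prod_Rge0 => k _; apply: q_nonneg.
case: (Req_dec (\big[Rmult/1]_k q k (w.1.1 k) (w.2 k)) 0) => [prod_eq0 | ?]; last lra.
by move: Pw; rewrite /joint prod_eq0 Rmult_0_r; lra.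
Qed.

Lemma loglik_channel I :
  loglik P (XZS I setT) = \big[Rplus/0]_(i in I) chan_loglik i + loglik P (XZS I (~: I)).
Proof.
rewrite /chan_loglik exchange_big /= /loglik -big_split /=; apply: eq_bigr => w _.
case: (Req_dec (P w) 0) => [-> | Pw].
  by rewrite big1 ?Rmult_0_l ?Rplus_0_l // => i _; rewrite Rmult_0_l.
have {}Pw : 0 < P w by have := joint_ge0 w; lra.
have massI : 0 < mass P (XZS I (~: I)) w.
  by have := mass_ge joint_ge0 (XZS I (~: I)) w; lra.
have prodI : 0 < \big[Rmult/1]_(i in I) q i (w.1.1 i) (w.2 i).
  apply: (big_ind (fun x => 0 < x)) => [| * | i _]; first lra.
    exact: Rmult_lt_0_compat.
  exact: channel_pos.
rewrite mass_channel_factor ln_mult // ln_prod => [|i _]; last exact: channel_pos.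
by rewrite Rmult_plus_distr_l big_distrr.
Qed.

Definition rate (I : {set 'I_M}) : R :=
  \big[Rplus/0]_(i in I) chan_loglik i + loglik P (ZS (~: I)) - loglik P (ZS setT).

Lemma cmi_rate I : cmi P (X_ I) (Z_ I) (fun w => (Z_ (~: I) w, S_ w)) = rate I.
Proof.
rewrite /cmi !entropy_loglik loglik_Zsplit loglik_XZsplit loglik_channel /rate.
have -> : loglik P (fun w => (X_ I w, (Z_ (~: I) w, S_ w))) = loglik P (XZS I (~: I)) by [].
have -> : loglik P (fun w => (Z_ (~: I) w, S_ w)) = loglik P (ZS (~: I)) by [].
ring.
Qed.

Lemma rate0 : rate set0 = 0.
Proof. by rewrite /rate big_set0 setC0; ring. Qed.

(* Supermodularity of the rate function: the channel part is modular and
   I |-> -H(Z_{I^c}, S) is supermodular by submodularity of entropy. *)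
Lemma rate_supermod A B : rate A + rate B <= rate (A :|: B) + rate (A :&: B).
Proof.
have chan_mod := weight_modular chan_loglik A B; rewrite /weight in chan_mod.
suff : loglik P (ZS (~: A)) + loglik P (ZS (~: B)) <=
    loglik P (ZS (~: A :&: ~: B)) + loglik P (ZS (~: A :|: ~: B)).
  by rewrite /rate setCU setCI; lra.
apply: (loglik_submod joint_ge0).
- move=> a b [/Z_eq ab Sab]; rewrite /ZS Sab; congr pair.
  by apply/Z_eq => k; rewrite inE => /andP [kA _]; apply: ab.
- move=> a b [/Z_eq ab Sab]; rewrite /ZS Sab; congr pair.
  by apply/Z_eq => k; rewrite inE => /andP [_ kB]; apply: ab.
- move=> a b [/Z_eq abA Sab] [/Z_eq abB _]; rewrite /ZS Sab; congr pair.
  by apply/Z_eq => k; rewrite inE => /orP [kA | kB]; [apply: abA | apply: abB].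
Qed.

End Model.

Lemma length_size (T : Type) (s : seq T) : length s = size s.
Proof. by elim: s => //= a s ->. Qed.

Lemma in_In (T : eqType) (x : T) (s : seq T) : x \in s -> List.In x s.
Proof.
elim: s => //= a s IH; rewrite in_cons => /orP [/eqP -> | xs]; [by left | by right; apply: IH].
Qed.

Lemma extreme_point_ext (M : nat) (C1 C2 : ('I_M -> R) -> Prop) r :
  (forall r, C1 r <-> C2 r) -> extreme_point C1 r -> extreme_point C2 r.
Proof.
move=> C12 [C1r ext]; split; first exact/C12.
by move=> a b t C2a C2b; apply: ext; apply/C12.
Qed.

Theorem lemma3 (M : nat) (X : 'I_M -> finType) (S : finType) (Z : 'I_M -> finType)
  (p : {dffun forall i : 'I_M, X i} -> S -> R)
  (q : forall k : 'I_M, X k -> Z k -> R)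
  (p_nonneg : forall x s, (0 <= p x s))
  (p_sum1 : rsum predT (fun xs : {dffun forall i : 'I_M, X i} * S => p xs.1 xs.2) = 1)
  (q_nonneg : forall k x z, (0 <= q k x z))
  (q_sum1 : forall k x, rsum predT (fun z => q k x z) = 1)
  (nondeg : nondegenerate (joint p q)) :
  exists l : list ('I_M -> R),
    (length l <= M`!)%coq_nat /\
    forall r, extreme_point (Bstar (joint p q)) r ->
      exists r', List.In r' l /\ forall i, r i = r' i.
Proof.
pose f := rate p q.
have Bstar_poly r : Bstar (joint p q) r <-> polyhedron f r.
  by split => B I I0; have := B I I0; rewrite /f cmi_rate.
exists (List.map (greedy f) (enum {perm 'I_M})); split.
  by rewrite List.length_map length_size -cardE card_Sn.
move=> r /(extreme_point_ext Bstar_poly) r_ext.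
have f_supermod := rate_supermod p_nonneg q_nonneg.
have [s r_greedy] := extreme_point_greedy (rate0 p q) f_supermod r_ext.1 r_ext.
exists (greedy f s); split => //.
by apply/List.in_map/in_In; rewrite mem_enum.
Qed.
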